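(* If $\mathcal{A}$ is a partial combinatory algebra whose underlying set is finite, then $|\mathcal{A}|=1$.
   Context: A partial applicative structure (pas) is a set $\mathcal{A}$ with a partial binary map $(a,b)\mapsto a\cdot b = ab$ (''$a$ applied to $b$''); application associates to the left ($abc=(ab)c$), $ab\downarrow$ means $ab$ is defined, and for closed terms $t\simeq s$ means both are undefined or both are defined and equal (application is strict). A pas is a partial combinatory algebra (pca) if it is combinatory complete: for every term $t(x_1,\dots,x_n,x)$ ($n\ge 0$) built from elements of $\mathcal{A}$, variables and application, there is $b\in\mathcal{A}$ with $ba_1\cdots a_n\downarrow$ and $ba_1\cdots a_na\simeq t(a_1,\dots,a_n,a)$ for all $a_1,\dots,a_n,a\in\mathcal{A}$. Equivalently, $\mathcal{A}$ contains elements $k,s$ with $kab=a$ and $sab\downarrow$, $sabc\simeq ac(bc)$ for all $a,b,c$. *)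

From mathcomp Require Import all_boot.
Set Implicit Arguments. Unset Strict Implicit. Unset Printing Implicit Defensive.

(* A partial applicative structure on a carrier A: partial binary application,
   with None meaning "undefined". *)
Definition pas (A : Type) := A -> A -> option A.

Definition papp {A : Type} (app : pas A) (x y : option A) : option A :=
  match x, y with
  | Some a, Some b => app a b
  | _, _ => None
  end.

Inductive term (A : Type) : Type :=
  | Const : A -> term A
  | Var : nat -> term A
  | App : term A -> term A -> term A.

Fixpoint vars_below {A : Type} (n : nat) (t : term A) : bool :=
  match t with
  | Const _ => true
  | Var i => i < n
  | App t1 t2 => vars_below n t1 && vars_below n t2
  end.

Fixpoint eval {A : Type} (app : pas A) (rho : nat -> A) (t : term A) : option A :=
  match t with
  | Const a => Some a
  | Var i => Some (rho i)
  | App t1 t2 => papp app (eval app rho t1) (eval app rho t2)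
  end.

Definition app_list {A : Type} (app : pas A) (b : A) (s : seq A) : option A :=
  foldl (fun acc a => papp app acc (Some a)) (Some b) s.

(* Combinatory completeness: for every term t(x_0,...,x_{n-1},x_n) there is b
   with b a_0 ... a_{n-1} defined and b a_0 ... a_{n-1} a ~ t(a_0,...,a_{n-1},a).
   Kleene equality of closed terms is equality in option A. *)
Definition combinatory_complete {A : Type} (app : pas A) : Prop :=
  forall (n : nat) (t : term A), vars_below n.+1 t ->
    exists b : A, forall (s : seq A), size s = n ->
      app_list app b s <> None /\
      forall a : A,
        app_list app b (rcons s a) = eval app (fun i => nth a (rcons s a) i) t.

Definition is_pca {A : Type} (app : pas A) : Prop := combinatory_complete app.

(* The combinator k makes a |-> k a injective, since k a b = a recovers a from k a.
   On a finite carrier it is then also surjective, so k a = i for some a, where i is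
   the identity combinator; hence c = i c = k a c = a for every c. *)
From mathcomp Require Import all_boot.

Set Implicit Arguments.
Unset Strict Implicit.
Unset Printing Implicit Defensive.

Definition is_K {A : Type} (app : pas A) (k : A) : Prop :=
  forall a, exists2 ka, app k a = Some ka & forall b, app ka b = Some a.

Definition is_I {A : Type} (app : pas A) (i : A) : Prop :=
  forall a, app i a = Some a.

Section CombinatorsOfPca.

Variables (A : Type) (app : pas A).
Hypothesis app_complete : is_pca app.

Lemma pca_K : exists k, is_K app k.
Proof.
have [k kP] := @app_complete 1 (Var A 0) isT.
exists k => a; have [kaD kaP] := kP [:: a] erefl.
move: kaD (kaP); rewrite /app_list /=; case: (app k a) => [ka _|//] kaE.
by exists ka => // b; have := kaE b.
Qed.

Lemma pca_I : exists i, is_I app i.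
Proof.
have [i iP] := @app_complete 0 (Var A 0) isT.
by exists i => a; have [_ /(_ a)] := iP [::] erefl.
Qed.

End CombinatorsOfPca.

(* a total version of a |-> k a, agreeing with it whenever k is a K-combinator *)
Definition kfun {A : Type} (app : pas A) (k a : A) : A := odflt a (app k a).

Lemma kfun_const (A : Type) (app : pas A) (k : A) :
  is_K app k -> forall a b, app (kfun app k a) b = Some a.
Proof. by move=> kK a b; have [ka kaE kaP] := kK a; rewrite /kfun kaE. Qed.

Lemma kfun_inj (A : Type) (app : pas A) (k : A) :
  is_K app k -> injective (kfun app k).
Proof.
move=> kK a b eq_ab; apply: Some_inj.
by rewrite -(kfun_const kK a a) eq_ab kfun_const.
Qed.

Lemma finite_KI_all_eq (A : finType) (app : pas A) (k i : A) :
  is_K app k -> is_I app i -> forall c : A, c = i.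
Proof.
move=> kK iI c; have [g _ gK] := injF_bij (kfun_inj kK).
have eq_gi d : d = g i by have := kfun_const kK (g i) d; rewrite gK iI => -[].
by rewrite (eq_gi c) (eq_gi i).
Qed.

Theorem mainTheorem1 (A : finType) (app : pas A) :
  is_pca app -> #|A| = 1.
Proof.
move=> pcaA; have [k kK] := pca_K pcaA; have [i iI] := pca_I pcaA.
rewrite -(card1 i); apply: eq_card => c.
by rewrite !inE (finite_KI_all_eq kK iI c) eqxx.
Qed.
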